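(* Let $r\ge 3$ and $1\le s\le r-1$ be integers. Then the automorphism group of the split Praeger-Xu graph $\mathrm{sC}(r,s)$ is $\mathrm{Aut}(\mathrm{sC}(r,s))=H$ (acting on $\mathrm{sC}(r,s)$ as described below), and $H$ acts transitively on $V\mathrm{sC}(r,s)$.
   Context: Praeger-Xu graphs: for $r\ge3$, $s\ge1$, let $V_{r,s}$ be the set of pairs $(x;\varepsilon_0\varepsilon_1\cdots\varepsilon_{s-1})$ with $x\in\mathbb{Z}_r$ and $\varepsilon_i\in\mathbb{Z}_2$; such a pair is identified with the directed walk $(x,\varepsilon_0),(x+1,\varepsilon_1),\dots,(x+s-1,\varepsilon_{s-1})$ in $\mathbb{Z}_r\times\mathbb{Z}_2$. The digraph $\vec{\mathrm{C}}(r,s)$ has vertex set $V_{r,s}$ and arcs from $(x;\varepsilon h)$ to $(x+1;h0)$ and $(x+1;h1)$ for every $\varepsilon\in\mathbb{Z}_2$ and every string $h$ of length $s-1$. $\mathrm{C}(r,s)$ is the underlying undirected ($4$-valent) graph. The partition $\mathcal{S}$ of $E\mathrm{C}(r,s)$ consists of the $4$-cycles $(x;0h)\sim(x+1;h0)\sim(x;1h)\sim(x+1;h1)\sim(x;0h)$, for $x\in\mathbb{Z}_r$ and $h$ a string in $\mathbb{Z}_2$ of length $s-1$. Splitting: for a $4$-valent graph $\Delta$ and a partition $\mathcal{C}$ of $E\Delta$ into cycles, $\mathrm{s}(\Delta,\mathcal{C})$ is the cubic graph with vertex set $\{(\alpha,C)\in V\Delta\times\mathcal{C}:\alpha\in VC\}$,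 $(\alpha,C)\sim(\beta,D)$ iff either $C\ne D$ and $\alpha=\beta$, or $C=D$ and $\alpha\sim\beta$ in $\Delta$. The split Praeger-Xu graph is $\mathrm{sC}(r,s)=\mathrm{s}(\mathrm{C}(r,s),\mathcal{S})$. The group $H$: let $H\cong C_2\wr D_r$ be the group of permutations of $\mathbb{Z}_r\times\mathbb{Z}_2$ of the form $(x,i)\mapsto(\varphi(x),i+c_x)$ with $\varphi(x)=\pm x+b$ ($b\in\mathbb{Z}_r$) and $(c_x)_{x\in\mathbb{Z}_r}\in\mathbb{Z}_2^{r}$ (generated by the transpositions $\tau_i$ swapping $(i,0),(i,1)$, the rotation $(x,i)\mapsto(x+1,i)$ and the reflection $(x,i)\mapsto(-x,i)$). An element $g\in H$ maps the walk $(x+j,\varepsilon_j)_{0\le j\le s-1}$ to the walk $((x+j,\varepsilon_j)^g)_j$, which is a forward or backward directed walk; reading it in the forward direction gives an element of $V_{r,s}$. This defines a faithful action of $H$ by automorphisms of $\mathrm{C}(r,s)$ that preserves $\mathcal{S}$, hence an action on $\mathrm{sC}(r,s)$ by $(v,C)^g=(v^g,C^g)$. *)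

From HB Require Import structures.
From mathcomp Require Import all_boot all_order all_fingroup all_algebra.
Set Implicit Arguments. Unset Strict Implicit. Unset Printing Implicit Defensive.
Import GRing.Theory.
Local Open Scope ring_scope.

(* Z_r is modelled by 'Z_r (the statement assumes 2 < r, so 'Z_r has r elements). *)

Definition PXvert (r s : nat) : finType := ('Z_r * (s.-tuple bool))%type.

(* Arc of the digraph C->(r,s): (x; eps h) -> (x+1; h delta). *)
Definition PXarc (r s : nat) (u v : PXvert r s) : bool :=
  (v.1 == u.1 + 1) && (behead (val u.2) == take s.-1 (val v.2)).

Definition PXadj (r s : nat) (u v : PXvert r s) : bool :=
  PXarc u v || PXarc v u.

(* Vertex set of the 4-cycle (x;0h) ~ (x+1;h0) ~ (x;1h) ~ (x+1;h1) of S,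
   indexed by x and the string h of length s-1. *)
Definition PXcycle (r s : nat) (x : 'Z_r) (h : seq bool) : {set PXvert r s} :=
  [set v : PXvert r s | ((v.1 == x) && (behead (val v.2) == h))
                      || ((v.1 == x + 1) && (take s.-1 (val v.2) == h))].

(* The partition S, each 4-cycle being represented by its vertex set. *)
Definition PXcycles (r s : nat) : {set {set PXvert r s}} :=
  [set @PXcycle r s x (val h) | x : 'Z_r, h : (s.-1).-tuple bool].

Definition sPXpred (r s : nat) (p : (PXvert r s * {set PXvert r s})%type) : bool :=
  (p.2 \in PXcycles r s) && (p.1 \in p.2).

Definition sPXvert (r s : nat) : finType :=
  {p : (PXvert r s * {set PXvert r s})%type | sPXpred p}.

Definition sPXadj (r s : nat) (a b : sPXvert r s) : bool :=
  let: (al, C) := val a in let: (be, D) := val b in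
  ((C != D) && (al == be)) || ((C == D) && PXadj al be).

(* The group H = C_2 wr D_r as a set of permutations of Z_r x Z_2:
   (x,i) |-> (+-x + b, i + c_x). *)
Definition Hgroup (r : nat) : {set {perm ('Z_r * bool)}} :=
  [set g : {perm ('Z_r * bool)} |
     [exists sg : bool, exists b : 'Z_r, exists c : {ffun 'Z_r -> bool},
        [forall p : ('Z_r * bool)%type,
           g p == ((if sg then - p.1 else p.1) + b, addb p.2 (c p.1))]]].

(* Action on V_{r,s}: map the walk (x+j, eps_j)_j pointwise and read the
   image walk in the forward direction. *)
Definition actV (r s : nat) (g : {perm ('Z_r * bool)}) (v : PXvert r s)
    : PXvert r s :=
  let pts := fun j : nat => g (v.1 + j%:R, nth false (val v.2) j) in
  let forward := (g (1, false)).1 == (g (0, false)).1 + 1 in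
  if forward then ((pts 0%N).1, [tuple (pts j).2 | j < s])
  else ((pts s.-1).1, [tuple (pts (s.-1 - j)%N).2 | j < s]).

Definition actP (r s : nat) (g : {perm ('Z_r * bool)})
    (p : (PXvert r s * {set PXvert r s})%type) :=
  (@actV r s g p.1, [set @actV r s g v | v in p.2]).

Definition is_sPXaut (r s : nat) (f : sPXvert r s -> sPXvert r s) : Prop :=
  bijective f /\ forall a b, sPXadj (f a) (f b) = sPXadj a b.

(* Encode a vertex (v, C) of sC(r,s) by the walk v and the side of v in C: C is
   either the 4-cycle of S containing the out-arcs of v or the one containing its
   in-arcs.  The edges of sC(r,s) are then the spokes (v,out)-(v,in) and one edge
   (u,out)-(v,in) for every arc u -> v of C->(r,s).  The spokes are exactly the edges
   lying on no 4-cycle, so an automorphism permutes the spokes and induces a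
   permutation F of the walks mapping all arcs forwards, or all of them backwards,
   since the digraph is connected.  Following arcs, an arc-preserving F shifts the
   level by a constant and each bit of a walk at position x + j is flipped by a
   function c of x + j only; composing with the reflection handles the backward
   case.  These maps are precisely those induced by H, and they act transitively on
   the walks, while H can exchange the two sides. *)

From mathcomp Require Import all_boot all_order all_fingroup all_algebra.
From mathcomp Require Import zify.
From mathcomp.algebra_tactics Require Import ring.
Set Implicit Arguments. Unset Strict Implicit. Unset Printing Implicit Defensive.
Import GRing.Theory.

Lemma eq_nthP (T : eqType) (x0 : T) n (p q : seq T) :
  size p = n -> size q = n ->
  reflect (forall j, (j < n)%N -> nth x0 p j = nth x0 q j) (p == q).
Proof.
move=> sp sq; apply: (iffP eqP) => [-> // | E].
by apply: (eq_from_nth (x0 := x0)) => [|j]; rewrite ?sp ?sq // => /E.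
Qed.

Section Squares.
Variables (T : finType) (e : rel T).

Definition on_square (a b : T) : bool :=
  [exists c, exists d, [&& e b c, e c d, e d a, c != a & d != b]].

Lemma on_square_sym a b : symmetric e -> on_square a b -> on_square b a.
Proof.
move=> e_sym /existsP [c /existsP [d /and5P [bc cd da ca db]]].
by apply/existsP; exists d; apply/existsP; exists c; rewrite e_sym da e_sym cd e_sym bc db ca.
Qed.

Lemma on_square_homo (h : T -> T) a b : injective h -> {homo h : x y / e x y} ->
  on_square a b -> on_square (h a) (h b).
Proof.
move=> h_inj h_e /existsP [c /existsP [d /and5P [bc cd da ca db]]].
apply/existsP; exists (h c); apply/existsP; exists (h d).
by rewrite (h_e _ _ bc) (h_e _ _ cd) (h_e _ _ da) !(inj_eq h_inj) ca db.
Qed.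

Lemma on_square_aut (h : T -> T) a b : bijective h -> {mono h : x y / e x y} ->
  on_square (h a) (h b) = on_square a b.
Proof.
move=> [hi hK hiK] h_e; apply/idP/idP; last exact: on_square_homo (can_inj hK) (mono2W h_e).
have hi_e : {homo hi : x y / e x y} by move=> x y exy; rewrite -h_e !hiK.
by move/(on_square_homo (can_inj hiK) hi_e); rewrite !hK.
Qed.

End Squares.

Section PraegerXu.
Local Open Scope ring_scope.
Variables r s : nat.
Hypotheses (r_gt2 : (2 < r)%N) (s_gt0 : (0 < s)%N) (s_lt_r : (s < r)%N).

Local Notation Z := 'Z_r.
Local Notation V := (PXvert r s).
Local Notation arc := (@PXarc r s).
Local Notation PXcycle := (@PXcycle r s).
Local Notation PXadj := (@PXadj r s).

Lemma val_Zr_nat k : (k < r)%N -> val (k%:R : Z) = k.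
Proof. by move=> kr; rewrite -[val _]/(nat_of_ord _) val_Zp_nat ?modn_small //; lia. Qed.

Lemma addrn_neq (x : Z) k : (0 < k < r)%N -> x + k%:R != x.
Proof.
move=> /andP [k_gt0 kr]; rewrite -subr_eq0 addrAC subrr add0r.
by apply/eqP => /(congr1 val); rewrite val_Zr_nat //= => k0; rewrite k0 in k_gt0.
Qed.

Lemma addr1_neq (x : Z) : x + 1 != x.
Proof. by apply: (addrn_neq x (k := 1)); lia. Qed.

Lemma addr2_neq (x : Z) : x + 1 + 1 != x.
Proof. by rewrite -addrA; apply: (addrn_neq x (k := 2)); lia. Qed.

Definition bit (v : V) (j : nat) : bool := nth false (val v.2) j.

Definition mkvert (x : Z) (d : nat -> bool) : V := (x, [tuple d (val j) | j < s]).

Lemma bit_mkvert x d j : (j < s)%N -> bit (mkvert x d) j = d j.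
Proof. by move=> js; rewrite /bit /= -[j]/(val (Ordinal js)) nth_mktuple. Qed.

Lemma PXvert_ext (u v : V) :
  u.1 = v.1 -> (forall j, (j < s)%N -> bit u j = bit v j) -> u = v.
Proof.
case: u v => [x d] [y e] /= -> E; congr (_, _); apply: val_inj.
by apply/eqP/(eq_nthP false (size_tuple d) (size_tuple e)).
Qed.

Lemma eq_mkvert x y d e :
  x = y -> (forall j, (j < s)%N -> d j = e j) -> mkvert x d = mkvert y e.
Proof. by move=> -> de; apply: PXvert_ext => // j js; rewrite !bit_mkvert ?de. Qed.

Lemma size_behead_vert (v : V) : size (behead (val v.2)) = s.-1.
Proof. by rewrite size_behead size_tuple. Qed.

Lemma size_take_vert (v : V) : size (take s.-1 (val v.2)) = s.-1.
Proof. by rewrite size_takel // size_tuple leq_pred. Qed.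

Lemma arcP u v :
  reflect (v.1 = u.1 + 1 /\ forall j, (j < s.-1)%N -> bit u j.+1 = bit v j) (arc u v).
Proof.
have eqP' := eq_nthP false (size_behead_vert u) (size_take_vert v).
apply: (iffP andP) => [[/eqP -> /eqP' E] | [-> E]].
  by split=> // j js; have := E j js; rewrite nth_behead nth_take.
by split=> //; apply/eqP' => j js; rewrite nth_behead nth_take //; apply: E.
Qed.

Lemma arc_level u v : arc u v -> v.1 = u.1 + 1.
Proof. by case/arcP. Qed.

Lemma arc_irr v : arc v v = false.
Proof. by apply/negbTE/negP => /arc_level/eqP; rewrite eq_sym (negbTE (addr1_neq _)). Qed.

Lemma arc_asym u v : arc u v -> arc v u = false.
Proof.
move=> /arc_level uv; apply/negbTE/negP => /arc_level vu.
by move: (addr2_neq u.1); rewrite -uv -vu eqxx.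
Qed.

Definition push (v : V) (e : bool) : V :=
  mkvert (v.1 + 1) (fun j => if (j < s.-1)%N then bit v j.+1 else e).

Lemma arc_push v e : arc v (push v e).
Proof. by apply/arcP; split=> // j js; rewrite bit_mkvert ?js //; lia. Qed.

Definition pushs (v : V) (l : seq bool) : V := foldl push v l.

Lemma pushs_level v l : (pushs v l).1 = v.1 + (size l)%:R.
Proof.
elim: l v => [|e l IH] v /=; first by rewrite addr0.
by rewrite IH /= -addrA -mulrS.
Qed.

Lemma bit_pushs v l j :
  (j < s)%N -> bit (pushs v l) j = nth false (val v.2 ++ l) (j + size l).
Proof.
elim/last_ind: l j => [|l e IH] j js; first by rewrite addn0 cats0.
rewrite /pushs foldl_rcons -/(pushs v l) bit_mkvert // size_rcons -cats1 catA.
rewrite nth_cat size_cat size_tuple; case: ltnP => j1.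
  by rewrite ifT ?IH ?addSnnS //; lia.
by rewrite ifN; [have -> : (j + (size l).+1 - (s + size l) = 0)%N by lia | lia].
Qed.

Lemma arc_connected (P : V -> Prop) :
  (forall u v, P u -> arc u v -> P v) -> forall u v, P u -> P v.
Proof.
move=> P_arc u v Pu.
have P_pushs l w : P w -> P (pushs w l).
  by elim: l w => [|e l IH] w Pw //=; apply/IH/(P_arc _ _ Pw)/arc_push.
pose w := pushs u (nseq (val (v.1 - u.1 - s%:R)) false).
suff -> : v = pushs w (val v.2) by apply/P_pushs/P_pushs.
apply: PXvert_ext => [|j js].
  by rewrite /w !pushs_level size_nseq size_tuple natr_Zp; ring.
by rewrite bit_pushs // size_tuple nth_cat size_tuple ltnNge leq_addl addnK.
Qed.

Definition pull (v : V) : V :=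
  mkvert (v.1 - 1) (fun j => if j is i.+1 then bit v i else false).

Lemma arc_pull v : arc (pull v) v.
Proof. by apply/arcP; split=> [|j js]; rewrite ?subrK // bit_mkvert //; lia. Qed.

Definition flip (v : V) (k : nat) : V := mkvert v.1 (fun j => (j == k) (+) bit v j).

Lemma flip_neq v k : (k < s)%N -> flip v k != v.
Proof.
move=> ks; apply/eqP => /(congr1 (bit^~ k)); rewrite bit_mkvert // eqxx.
by case: (bit v k).
Qed.

Lemma arc_flip_first u v : arc (flip u 0) v = arc u v.
Proof.
have bit_flip j : (0 < j < s)%N -> bit (flip u 0) j = bit u j.
  by case/andP=> j0 js; rewrite bit_mkvert // (gtn_eqF j0).
by apply/arcP/arcP => -[e E]; split=> // j js; rewrite -E // bit_flip //; lia.
Qed.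

Lemma arc_flip_last u v : arc u (flip v s.-1) = arc u v.
Proof.
have bit_flip j : (j < s.-1)%N -> bit (flip v s.-1) j = bit v j.
  by move=> js; rewrite bit_mkvert ?(ltn_eqF js) //; lia.
by apply/arcP/arcP => -[e E]; split=> // j js; rewrite E ?bit_flip.
Qed.

Definition out_cycle (v : V) : {set V} := PXcycle v.1 (behead (val v.2)).
Definition in_cycle (v : V) : {set V} := PXcycle (v.1 - 1) (take s.-1 (val v.2)).

Lemma out_cycle_in v : out_cycle v \in PXcycles r s.
Proof. by apply/imset2P; exists v.1 [tuple of behead (val v.2)]. Qed.

Lemma in_cycle_in v : in_cycle v \in PXcycles r s.
Proof. by apply/imset2P; exists (v.1 - 1) (Tuple (introT eqP (size_take_vert v))). Qed.

Lemma PXcyclesP v C :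
  C \in PXcycles r s -> v \in C -> C = out_cycle v \/ C = in_cycle v.
Proof.
case/imset2P => x h _ _ ->; rewrite inE.
case/orP => /andP [/eqP vx /eqP vh]; [left | right]; rewrite /out_cycle /in_cycle vx vh //.
by rewrite addrK.
Qed.

Lemma mem_out_cycle a v :
  (v \in out_cycle a) = arc a v || [exists w, arc a w && arc v w].
Proof.
have eqP' := eq_nthP false (size_behead_vert v) (size_behead_vert a).
rewrite /out_cycle /PXcycle inE orbC; congr (_ || _).
  by rewrite /PXarc [take _ _ == _]eq_sym.
apply/andP/existsP => [[/eqP va /eqP'] E | [w /andP [/arcP [wa Ea] /arcP [wv Ev]]]].
  exists (push a false); rewrite arc_push; apply/arcP; split; first by rewrite va.
  by move=> j js; rewrite bit_mkvert ?js; [rewrite /bit -!nth_behead; exact: E | lia].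
split; first by apply/eqP/(addIr 1); rewrite -wa -wv.
by apply/eqP' => j js; rewrite !nth_behead; exact: etrans (Ev j js) (esym (Ea j js)).
Qed.

Lemma mem_in_cycle b v :
  (v \in in_cycle b) = arc v b || [exists u, arc u b && arc u v].
Proof.
have eqP' := eq_nthP false (size_take_vert v) (size_take_vert b).
rewrite /in_cycle /PXcycle inE subrK; congr (_ || _).
  by rewrite /PXarc eq_sym subr_eq.
apply/andP/existsP => [[/eqP vb /eqP'] E | [u /andP [/arcP [ub Eb] /arcP [uv Ev]]]].
  exists (pull b); rewrite arc_pull; apply/arcP; split; first by rewrite vb subrK.
  move=> j js; rewrite bit_mkvert; last by lia.
  by have := E j js; rewrite !nth_take.
split; first by rewrite uv ub.
by apply/eqP' => j js; rewrite !nth_take //; exact: etrans (esym (Ev j js)) (Eb j js).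
Qed.

Lemma mem_out_cycle_self a : a \in out_cycle a.
Proof.
rewrite mem_out_cycle; apply/orP; right.
by apply/existsP; exists (push a false); rewrite arc_push.
Qed.

Lemma mem_in_cycle_self b : b \in in_cycle b.
Proof.
rewrite mem_in_cycle; apply/orP; right.
by apply/existsP; exists (pull b); rewrite arc_pull.
Qed.

Lemma PXcycle_level x h u v :
  u \in PXcycle x h -> v \in PXcycle x h -> v.1 = u.1 + 1 -> u.1 = x.
Proof.
rewrite !inE => /orP [/andP [/eqP -> _] // | /andP [/eqP ux _]].
case/orP => /andP [/eqP vx _] vu.
  by move: (addr2_neq x); rewrite -ux -vu vx eqxx.
by move: (addr1_neq u.1); rewrite -vu vx ux eqxx.
Qed.

Lemma out_cycle_level a b : out_cycle a = out_cycle b -> a.1 = b.1.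
Proof.
move=> E; apply: (PXcycle_level (h := behead (val b.2)) (v := push a false)) => //.
all: rewrite -/(out_cycle b) -E.
  exact: mem_out_cycle_self.
by rewrite mem_out_cycle arc_push.
Qed.

Lemma in_cycle_level a b : in_cycle a = in_cycle b -> a.1 = b.1.
Proof.
move=> E; apply: (addIr (-1)).
apply: (PXcycle_level (h := take s.-1 (val b.2)) (u := pull a) (v := a)).
- by rewrite -/(in_cycle b) -E mem_in_cycle arc_pull.
- by rewrite -/(in_cycle b) -E mem_in_cycle_self.
- by rewrite /= subrK.
Qed.

Lemma eq_out_in_cycle a b : (out_cycle a == in_cycle b) = arc a b.
Proof.
apply/eqP/idP => [E | /andP [/eqP ba /eqP E]]; last by rewrite /in_cycle ba addrK -E.
have pull_b : b.1 - 1 = a.1.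
  apply: (PXcycle_level (h := behead (val a.2)) (u := pull b) (v := b)).
  all: rewrite -/(out_cycle a) ?E ?mem_in_cycle_self //=.
    by rewrite mem_in_cycle arc_pull.
  by rewrite subrK.
have : b \in out_cycle a by rewrite E mem_in_cycle_self.
rewrite mem_out_cycle => /orP [// | /existsP [w /andP [/arc_level aw /arc_level bw]]].
have ab : a.1 = b.1 by apply: (addIr 1); rewrite -aw -bw.
by move: (addr1_neq (b.1 - 1)); rewrite subrK pull_b ab eqxx.
Qed.

Definition arc_dir (d : bool) (u v : V) : bool := if d then arc u v else arc v u.

(* (v, true) stands for the vertex (v, C) of sC(r,s) where C is the cycle of S
   containing the out-arcs of v, and (v, false) for the one containing its in-arcs. *)
Definition side_cycle (x : V * bool) : {set V} :=
  if x.2 then out_cycle x.1 else in_cycle x.1.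

Lemma mem_side_cycle x v : (v \in side_cycle x) =
  arc_dir x.2 x.1 v || [exists w, arc_dir x.2 x.1 w && arc_dir x.2 v w].
Proof. by case: x => a []; rewrite /side_cycle /= ?mem_out_cycle ?mem_in_cycle. Qed.

Lemma side_cycle_pred x : sPXpred (x.1, side_cycle x).
Proof.
case: x => a []; rewrite /sPXpred /side_cycle /=.
  by rewrite out_cycle_in mem_out_cycle_self.
by rewrite in_cycle_in mem_in_cycle_self.
Qed.

Definition svert (x : V * bool) : sPXvert r s :=
  exist (fun p => sPXpred p) (x.1, side_cycle x) (side_cycle_pred x).

Definition unsvert (a : sPXvert r s) : V * bool :=
  ((val a).1, (val a).2 == out_cycle (val a).1).

Lemma svertK : cancel svert unsvert.
Proof.
case=> v []; rewrite /unsvert /side_cycle /= ?eqxx //.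
by rewrite eq_sym eq_out_in_cycle arc_irr.
Qed.

Lemma unsvertK : cancel unsvert svert.
Proof.
case=> [[v C] pf]; have /andP [C_in vC] := pf; rewrite /= in C_in vC.
apply: val_inj; rewrite /= /side_cycle /=.
case: eqP => [-> // | ne].
by case: (PXcyclesP C_in vC) ne => -> // /(_ erefl).
Qed.

Definition sadj (x y : V * bool) : bool :=
  (x.2 != y.2) && ((x.1 == y.1) || arc_dir x.2 x.1 y.1).

Lemma sadj_sym : symmetric sadj.
Proof. by case=> a [] [b []]; rewrite /sadj //= eq_sym. Qed.

Lemma PXadj_level u v : u.1 = v.1 -> PXadj u v = false.
Proof.
move=> uv; apply/norP; split; apply/negP => /arc_level/eqP.
  by rewrite uv eq_sym (negbTE (addr1_neq _)).
by rewrite -uv eq_sym (negbTE (addr1_neq _)).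
Qed.

Lemma sPXadj_svert x y : sPXadj (svert x) (svert y) = sadj x y.
Proof.
case: x y => a [] [b []]; rewrite /sPXadj /= /side_cycle /sadj /arc_dir /=.
- case: (eqVneq a b) => [-> | _]; first by rewrite eqxx /= PXadj_level.
  by rewrite andbF /=; case: eqP => // /out_cycle_level /PXadj_level ->.
- by rewrite eq_out_in_cycle /PXadj; case: (arc a b); rewrite /= ?orbT ?orbF.
- by rewrite eq_sym eq_out_in_cycle /PXadj; case: (arc b a); rewrite /= ?orbT ?orbF.
- case: (eqVneq a b) => [-> | _]; first by rewrite eqxx /= PXadj_level.
  by rewrite andbF /=; case: eqP => // /in_cycle_level /PXadj_level ->.
Qed.

Lemma sPXaut_conj f : is_sPXaut f ->
  injective (unsvert \o f \o svert) /\ {mono unsvert \o f \o svert : x y / sadj x y}.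
Proof.
case=> /bij_inj f_inj f_adj; split.
  exact: inj_comp (inj_comp (can_inj unsvertK) f_inj) (can_inj svertK).
by move=> x y; rewrite /= -sPXadj_svert !unsvertK f_adj sPXadj_svert.
Qed.

Lemma sPXaut_lift h : injective h -> {mono h : x y / sadj x y} ->
  is_sPXaut (svert \o h \o unsvert).
Proof.
move=> h_inj h_adj; split.
  exact/injF_bij/(inj_comp (inj_comp (can_inj svertK) h_inj) (can_inj unsvertK)).
by move=> a b; rewrite /= sPXadj_svert h_adj -sPXadj_svert !unsvertK.
Qed.

(** * Spokes are the edges on no 4-cycle *)

Lemma square_arc u v : arc u v -> on_square sadj (u, true) (v, false).
Proof.
move=> uv; have f0 := flip_neq u s_gt0; have fl : flip v s.-1 != v by apply: flip_neq; lia.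
apply/existsP; exists (flip u 0, true); apply/existsP; exists (flip v s.-1, false).
by rewrite /sadj /= !arc_flip_first !arc_flip_last uv !orbT !xpair_eqE !andbT f0 fl.
Qed.

Lemma spoke_not_on_square v : ~~ on_square sadj (v, true) (v, false).
Proof.
apply/negP => /existsP [[c sc] /existsP [[d sd] /and5P []]].
rewrite /sadj /arc_dir !xpair_eqE; case: sc; case: sd => //=; rewrite !eqxx !andbT.
move=> /orP [/eqP vc | cv] cd; first by rewrite vc eqxx.
case/orP => [/eqP -> | vd]; first by rewrite eqxx.
case/orP: cd => [/eqP cd | /arc_level cd]; first by rewrite -cd (arc_asym cv) in vd.
rewrite (arc_level vd) (arc_level cv) in cd.
by move/eqP: cd; rewrite (negbTE (addr1_neq _)).
Qed.

Lemma on_square_spoke x y : sadj x y -> on_square sadj x y = (x.1 != y.1).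
Proof.
case: x y => u [] [v []] //; rewrite /sadj /arc_dir /= => /orP [/eqP <- | uv].
- by rewrite eqxx (negbTE (spoke_not_on_square u)).
- have -> : u != v by apply: contraTneq uv => ->; rewrite arc_irr.
  exact: square_arc.
- rewrite eqxx; apply/negbTE/negP => /(on_square_sym sadj_sym).
  exact/negP/spoke_not_on_square.
- have -> : u != v by apply: contraTneq uv => ->; rewrite arc_irr.
  exact/(on_square_sym sadj_sym)/square_arc.
Qed.

Lemma aut_spoke h x y : injective h -> {mono h : x y / sadj x y} ->
  sadj x y -> ((h x).1 == (h y).1) = (x.1 == y.1).
Proof.
move=> /injF_bij h_bij h_adj xy; have hxy : sadj (h x) (h y) by rewrite h_adj.
apply: negb_inj; rewrite -(on_square_spoke hxy) -(on_square_spoke xy).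
exact: on_square_aut.
Qed.

(** * The action of H *)

Definition shift (b : Z) (c : Z -> bool) (v : V) : V :=
  mkvert (v.1 + b) (fun j => bit v j (+) c (v.1 + j%:R)).

Definition mirror (v : V) : V := mkvert (- (v.1 + (s.-1)%:R)) (fun j => bit v (s.-1 - j)).

Lemma shift_inj b c : injective (shift b c).
Proof.
move=> u v /[dup] /(congr1 fst) /addIr uv E; apply: PXvert_ext => // j js.
by move/(congr1 (bit^~ j)): E; rewrite !bit_mkvert // uv => /addIb.
Qed.

Lemma mirrorK : involutive mirror.
Proof.
move=> v; apply: PXvert_ext => [|j js]; first by rewrite /=; ring.
by rewrite !bit_mkvert; [congr bit | |]; lia.
Qed.

Lemma arc_shift b c u v : arc (shift b c u) (shift b c v) = arc u v.
Proof.
have succE j (x : Z) : x + 1 + j%:R = x + j.+1%:R by rewrite mulrSr addrAC addrA.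
apply/arcP/arcP => /= -[e E].
  have uv : v.1 = u.1 + 1 by apply: (addIr b); rewrite e addrAC.
  split=> // j js; move: (E j js); rewrite !bit_mkvert; try lia.
  by rewrite uv succE => /addIb.
split; first by rewrite e addrAC.
by move=> j js; rewrite !bit_mkvert ?e ?succE ?E //; lia.
Qed.

Lemma arc_mirror u v : arc (mirror u) (mirror v) = arc v u.
Proof.
apply/arcP/arcP => /= -[e E]; split.
- have -> : u.1 = - (- (u.1 + (s.-1)%:R) + 1) - (s.-1)%:R + 1 by ring.
  by rewrite -e; ring.
- move=> j js; have k_lt : (s.-1 - j.+1 < s.-1)%N by lia.
  move: (E _ k_lt); rewrite !bit_mkvert; [|lia..].
  have -> : (s.-1 - (s.-1 - j.+1).+1 = j)%N by lia.
  by have -> : (s.-1 - (s.-1 - j.+1) = j.+1)%N by lia.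
- by rewrite e; ring.
- move=> j js; rewrite !bit_mkvert; try lia.
  by rewrite -E; [congr bit | ]; lia.
Qed.

(* The map on walks induced by (x, i) |-> ((if sg then - x else x) + b, i (+) c x). *)
Definition Hvert (sg : bool) (b : Z) (c : Z -> bool) (v : V) : V :=
  if sg then mirror (shift (- b) c v) else shift b c v.

Lemma Hvert_inj sg b c : injective (Hvert sg b c).
Proof. by case: sg; [apply: inj_comp (can_inj mirrorK) _|]; apply: shift_inj. Qed.

Lemma arc_Hvert sg b c u v : arc (Hvert sg b c u) (Hvert sg b c v) = arc_dir (~~ sg) u v.
Proof. by case: sg; rewrite /Hvert ?arc_mirror arc_shift. Qed.

Lemma shift_transitive u v : exists b c, shift b c u = v.
Proof.
exists (v.1 - u.1), (fun y => let k := val (y - u.1) in bit u k (+) bit v k).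
apply: PXvert_ext => [|j js]; first by rewrite /=; ring.
rewrite bit_mkvert // (_ : u.1 + j%:R - u.1 = j%:R); last by ring.
by rewrite val_Zr_nat ?addKb //; lia.
Qed.

Lemma Hvert_transitive sg u v : exists b c, Hvert sg b c u = v.
Proof.
case: sg; last exact: shift_transitive.
have [b [c E]] := shift_transitive u (mirror v).
by exists (- b), c; rewrite /Hvert opprK E mirrorK.
Qed.

Definition split_map (phi : V -> V) (sg : bool) (x : V * bool) : V * bool :=
  (phi x.1, x.2 (+) sg).

Lemma split_map_inj phi sg : injective phi -> injective (split_map phi sg).
Proof. by move=> phi_inj [u d] [v e] [/phi_inj -> /addIb ->]. Qed.

Section ArcDirMap.
Variables (phi : V -> V) (sg : bool).
Hypothesis phi_arc : forall u v, arc (phi u) (phi v) = arc_dir (~~ sg) u v.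

Lemma arc_dir_map d u v : arc_dir (d (+) sg) (phi u) (phi v) = arc_dir d u v.
Proof. by rewrite /arc_dir !phi_arc /arc_dir; case: d; case: sg. Qed.

Lemma sadj_split_map : injective phi -> {mono split_map phi sg : x y / sadj x y}.
Proof.
move=> phi_inj [u d] [v e]; rewrite /sadj /= (inj_eq phi_inj) arc_dir_map.
by case: d e sg => [] [] [].
Qed.

Lemma mem_side_cycle_map : bijective phi ->
  forall x v, (phi v \in side_cycle (split_map phi sg x)) = (v \in side_cycle x).
Proof.
case=> psi phiK psiK x v; rewrite !mem_side_cycle /= arc_dir_map; congr (_ || _).
apply/existsP/existsP => [[w] | [w]]; last by exists (phi w); rewrite !arc_dir_map.
by rewrite -[w]psiK !arc_dir_map => wP; exists (psi w).
Qed.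

Lemma imset_side_cycle : bijective phi ->
  forall x, phi @: side_cycle x = side_cycle (split_map phi sg x).
Proof.
move=> phi_bij x; have [psi phiK psiK] := phi_bij.
apply/setP => w; rewrite (can2_imset_pre _ phiK psiK) inE.
by rewrite -(mem_side_cycle_map phi_bij) psiK.
Qed.

End ArcDirMap.

Definition Helt (sg : bool) (b : Z) (c : Z -> bool) (p : Z * bool) : Z * bool :=
  ((if sg then - p.1 else p.1) + b, p.2 (+) c p.1).

Lemma Helt_inj sg b c : injective (Helt sg b c).
Proof.
move=> [x i] [y j] E; have /addIr /= xy := congr1 fst E; have /= ij := congr1 snd E.
have {}xy : x = y by case: sg {E} xy => // /oppr_inj.
by move: ij; rewrite xy => /addIb ->.
Qed.

Definition Hperm sg b c : {perm Z * bool} := perm (@Helt_inj sg b c).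

Lemma HpermE sg b c : Hperm sg b c =1 Helt sg b c.
Proof. by move=> p; rewrite permE. Qed.

Lemma Hperm_in sg b c : Hperm sg b c \in Hgroup r.
Proof.
rewrite inE; apply/existsP; exists sg; apply/existsP; exists b; apply/existsP.
by exists [ffun y => c y]; apply/forallP => p; rewrite HpermE ffunE.
Qed.

Lemma HgroupP g : g \in Hgroup r -> exists sg b (c : Z -> bool), g =1 Helt sg b c.
Proof.
rewrite inE => /existsP [sg /existsP [b /existsP [c /forallP gE]]].
by exists sg, b, c => p; apply/eqP/gE.
Qed.

Lemma actVE (g : {perm Z * bool}) v : actV g v =
  if (g (1, false)).1 == (g (0, false)).1 + 1
  then mkvert (g (v.1 + 0%:R, bit v 0)).1 (fun j => (g (v.1 + j%:R, bit v j)).2)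
  else mkvert (g (v.1 + (s.-1)%:R, bit v s.-1)).1
              (fun j => (g (v.1 + (s.-1 - j)%:R, bit v (s.-1 - j))).2).
Proof. by []. Qed.

Lemma actV_Helt (g : {perm Z * bool}) sg b c : g =1 Helt sg b c -> actV g =1 Hvert sg b c.
Proof.
move=> gE v; rewrite actVE !gE /Hvert /Helt /=; case: sg gE => gE.
  have -> : (- 1 + b == - 0 + b + 1) = false.
    apply: contraNF (addr2_neq (- 1 + b)) => /eqP e.
    by rewrite {2}e; apply/eqP; ring.
  apply: eq_mkvert => [|j js]; first by rewrite /=; ring.
  by rewrite gE bit_mkvert //; lia.
by rewrite add0r addrC eqxx; apply: eq_mkvert => [|j js]; rewrite ?addr0 ?gE.
Qed.

(* An element of H maps all arcs forwards or all backwards; accordingly the image of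
   the constant walk at (x, e) starts or ends at the image of (x, e). *)
Definition point_of (F : V -> V) (p : Z * bool) : Z * bool :=
  let v := mkvert p.1 (fun=> p.2) in
  if arc (F v) (F (push v p.2)) then ((F v).1, bit (F v) 0)
  else ((F v).1 + (s.-1)%:R, bit (F v) s.-1).

Lemma eq_point_of F G : F =1 G -> point_of F =1 point_of G.
Proof. by move=> FG p; rewrite /point_of !FG. Qed.

Lemma point_of_Hvert sg b c : point_of (Hvert sg b c) =1 Helt sg b c.
Proof.
case=> x e; rewrite /point_of arc_Hvert /arc_dir /Helt; case: sg.
  rewrite (arc_asym (arc_push _ _)) /Hvert /mirror !bit_mkvert ?subnn ?addr0; [|lia..].
  by congr (_, _); rewrite /=; ring.
by rewrite arc_push /Hvert !bit_mkvert ?addr0 //=; lia.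
Qed.

Lemma Hgroup_faithful g g' : g \in Hgroup r -> g' \in Hgroup r ->
  (forall a : sPXvert r s, actP g (val a) = actP g' (val a)) -> g = g'.
Proof.
move=> /HgroupP [sg [b [c gE]]] /HgroupP [sg' [b' [c' g'E]]] gg'.
have gg'V (v : V) : actV g v = actV g' v by have := congr1 fst (gg' (svert (v, true))).
apply/permP => p; rewrite gE g'E -!point_of_Hvert.
by apply: eq_point_of => v; rewrite -(actV_Helt gE) -(actV_Helt g'E) gg'V.
Qed.

(** * Arc-preserving maps are induced by H *)

Section ArcPreservingMap.
Variable F : V -> V.
Hypotheses (F_inj : injective F) (F_arc : forall u v, arc u v -> arc (F u) (F v)).

Lemma arc_map_level u v : (F v).1 - v.1 = (F u).1 - u.1.
Proof.
apply: (@arc_connected (fun w => (F w).1 - w.1 = (F u).1 - u.1)) => // w w' <- ww'.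
by rewrite (arc_level (F_arc ww')) (arc_level ww'); ring.
Qed.

Lemma bit_arc_map_prefix k a a' : (k < s)%N -> a.1 = a'.1 ->
  (forall i, (i <= k)%N -> bit a i = bit a' i) -> bit (F a) k = bit (F a') k.
Proof.
move=> ks; move Hn : (s.-1 - k)%N => n.
elim: n k ks Hn a a' => [|n IH] k ks Hn a a' aa' E.
  by congr (bit (F _)); apply: PXvert_ext => // j js; apply: E; lia.
(* Bit k of F a is bit k.+1 of F (pull a), and pull a begins with false :: a. *)
have /arcP [_ Ea] := F_arc (arc_pull a); have /arcP [_ Ea'] := F_arc (arc_pull a').
rewrite -Ea -?Ea'; try lia.
apply: IH => [|||[|i] ik]; rewrite /= ?aa' ?bit_mkvert //; try lia.
by apply: E; lia.
Qed.

Definition head_bit (y : Z) (e : bool) : bool :=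
  bit (F (mkvert y (fun i => (i == 0)%N && e))) 0.

Lemma bit0_arc_map a : bit (F a) 0 = head_bit a.1 (bit a 0).
Proof. by apply: bit_arc_map_prefix => // -[|i] //; rewrite bit_mkvert. Qed.

Lemma bit_arc_map a j : (j < s)%N -> bit (F a) j = head_bit (a.1 + j%:R) (bit a j).
Proof.
move=> js; have -> : bit (F a) j = bit (F (pushs a (nseq j false))) 0.
  elim: j a js => [|j IH] a js //.
  have /arcP [_ Ea] := F_arc (arc_push a false).
  by rewrite Ea; [apply: IH | ]; lia.
rewrite bit0_arc_map pushs_level size_nseq bit_pushs // size_nseq.
by rewrite nth_cat size_tuple js.
Qed.

Lemma head_bitN y : head_bit y true = ~~ head_bit y false.
Proof.
pose a e := mkvert y (fun i => (i == 0)%N && e).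
suff : head_bit y true != head_bit y false.
  by case: (head_bit y true); case: (head_bit y false).
apply/negP => /eqP E; have : a true = a false.
  apply: F_inj; apply: PXvert_ext => [|j js].
    by apply: (addIr (- y)); exact: arc_map_level.
  rewrite !bit_arc_map // !bit_mkvert //.
  by case: j js => [|j] js //; rewrite addr0.
by move/(congr1 (bit^~ 0%N)); rewrite !bit_mkvert.
Qed.

Lemma arc_map_shift : exists b c, F =1 shift b c.
Proof.
pose u := mkvert 0 (fun=> false).
exists ((F u).1 - u.1), (fun y => head_bit y false) => v.
apply: PXvert_ext => [|j js]; first by rewrite /= -(arc_map_level u v); ring.
by rewrite bit_arc_map // bit_mkvert //; case: (bit v j); rewrite ?head_bitN.
Qed.

End ArcPreservingMap.

Lemma arc_dir_map_Hvert F sg : injective F ->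
  (forall u v, arc u v -> arc_dir (~~ sg) (F u) (F v)) -> exists b c, F =1 Hvert sg b c.
Proof.
case: sg => F_inj F_arc; last exact: arc_map_shift.
have mF_inj : injective (mirror \o F) := inj_comp (can_inj mirrorK) F_inj.
have mF_arc u v : arc u v -> arc ((mirror \o F) u) ((mirror \o F) v).
  by move/F_arc; rewrite /= arc_mirror.
have [b [c E]] := arc_map_shift mF_inj mF_arc.
by exists (- b), c => v; rewrite /Hvert opprK -E mirrorK.
Qed.

Section SadjAutomorphism.
Variable h : V * bool -> V * bool.
Hypotheses (h_inj : injective h) (h_adj : {mono h : x y / sadj x y}).

Let F v := (h (v, true)).1.
Let swaps v := ~~ (h (v, true)).2.

Lemma aut_side v d : h (v, d) = (F v, d (+) swaps v).
Proof.
rewrite /F /swaps; case: d; first by case: (h (v, true)) => w t /=; rewrite negbK.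
have vv : sadj (v, true) (v, false) by rewrite /sadj /= eqxx.
have hv : (h (v, true)).1 = (h (v, false)).1.
  by apply/eqP; rewrite (aut_spoke h_inj h_adj vv) /= eqxx.
rewrite -(h_adj _ _) in vv.
move: (h (v, true)) (h (v, false)) hv vv => [w t] [w' t'] /= <- /andP [side _].
by case: t t' side => [] [].
Qed.

Lemma aut_arc u v : arc u v -> swaps u = swaps v /\ arc_dir (~~ swaps u) (F u) (F v).
Proof.
move=> uv; have uv' : sadj (u, true) (v, false) by rewrite /sadj /= uv orbT.
have u_neq_v : (u == v) = false by apply/negbTE; apply: contraTneq uv => ->; rewrite arc_irr.
have := aut_spoke h_inj h_adj uv'; rewrite -(h_adj _ _) in uv'.
rewrite !aut_side /= u_neq_v; move: uv'; rewrite !aut_side /sadj /= => /andP [side].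
move=> /orP [/eqP -> | F_arc]; first by rewrite eqxx.
by case: (swaps u) (swaps v) side F_arc => [] [].
Qed.

Lemma swaps_const u v : swaps u = swaps v.
Proof.
apply/esym; apply: (@arc_connected (fun w => swaps w = swaps u)) => // w w' <-.
by case/aut_arc.
Qed.

Lemma aut_vertex_inj : injective F.
Proof.
move=> u v Fuv; have : h (u, true) = h (v, true) by rewrite !aut_side Fuv (swaps_const u v).
by move/h_inj => [].
Qed.

Lemma sadj_aut_Hvert : exists sg b c, h =1 split_map (Hvert sg b c) sg.
Proof.
pose v0 := mkvert 0 (fun=> false).
have [b [c FE]] : exists b c, F =1 Hvert (swaps v0) b c.
  apply: arc_dir_map_Hvert aut_vertex_inj _ => u v /aut_arc [_].
  by rewrite (swaps_const u v0).
by exists (swaps v0), b, c => -[v d]; rewrite aut_side /split_map /= FE (swaps_const v v0).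
Qed.

End SadjAutomorphism.

Lemma actP_svert (g : {perm Z * bool}) sg b c : g =1 Helt sg b c ->
  forall x, actP g (val (svert x)) = val (svert (split_map (Hvert sg b c) sg x)).
Proof.
move=> gE x; rewrite /actP /= (actV_Helt gE) (eq_imset _ (actV_Helt gE)).
by rewrite (imset_side_cycle (arc_Hvert _ _ _) (injF_bij (@Hvert_inj _ _ _))).
Qed.

Lemma Hgroup_sPXaut g : g \in Hgroup r ->
  exists f : sPXvert r s -> sPXvert r s,
    is_sPXaut f /\ forall a, val (f a) = actP g (val a).
Proof.
case/HgroupP => sg [b [c gE]].
exists (svert \o split_map (Hvert sg b c) sg \o unsvert); split.
  apply: sPXaut_lift; first exact/split_map_inj/Hvert_inj.
  exact: sadj_split_map (arc_Hvert _ _ _) (@Hvert_inj _ _ _).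
by move=> a; rewrite -[in RHS](unsvertK a) (actP_svert gE).
Qed.

Lemma sPXaut_Hgroup (f : sPXvert r s -> sPXvert r s) : is_sPXaut f ->
  exists2 g, g \in Hgroup r & forall a, val (f a) = actP g (val a).
Proof.
case/sPXaut_conj => h_inj h_adj; have [sg [b [c hE]]] := sadj_aut_Hvert h_inj h_adj.
exists (Hperm sg b c) => [|a]; first exact: Hperm_in.
by rewrite -[a]unsvertK (actP_svert (HpermE sg b c)) -hE [in RHS]/comp !unsvertK.
Qed.

Lemma Hgroup_transitive (a b : sPXvert r s) : exists2 g, g \in Hgroup r & actP g (val a) = val b.
Proof.
rewrite -(unsvertK a) -(unsvertK b); move: (unsvert a) (unsvert b) => [u d] [v e].
have [bb [c E]] := Hvert_transitive (d (+) e) u v.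
exists (Hperm (d (+) e) bb c); first exact: Hperm_in.
by rewrite (actP_svert (HpermE _ _ _)) /split_map /= E addKb.
Qed.

End PraegerXu.

Theorem lemma2p12 (r s : nat) :
  (2 < r)%N -> (1 <= s)%N -> (s <= r - 1)%N ->
  [/\ (* H acts on sC(r,s) by automorphisms *)
      (forall g, g \in Hgroup r ->
         exists f : sPXvert r s -> sPXvert r s,
           is_sPXaut f /\ forall a, val (f a) = actP g (val a)),
      (* the action is faithful *)
      (forall g g', g \in Hgroup r -> g' \in Hgroup r ->
         (forall a : sPXvert r s, actP g (val a) = actP g' (val a)) -> g = g'),
      (* every automorphism of sC(r,s) comes from H, i.e. Aut(sC(r,s)) = H *)
      (forall f : sPXvert r s -> sPXvert r s, is_sPXaut f ->
         exists2 g, g \in Hgroup r & forall a, val (f a) = actP g (val a))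
    & (* H is transitive on V sC(r,s) *)
      (forall a b : sPXvert r s,
         exists2 g, g \in Hgroup r & actP g (val a) = val b)].
Proof.
move=> r_gt2 s_gt0 s_le; have s_lt_r : (s < r)%N by lia.
split.
- exact: Hgroup_sPXaut.
- exact: Hgroup_faithful.
- exact: sPXaut_Hgroup.
- exact: Hgroup_transitive.
Qed.
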